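(* Let $\mathcal{I}$ be a distributive interval hypergraph on $[n]$, $A$ an acyclic orientation of $\mathcal{I}$, and $J\in\mathcal{I}$ with $j=A(J)\ne\min(J)$. Then there exists $i$ with \[ \min(J)\le i\le\max\{\max(I): I\in\mathcal{I},\ \min(I)=\min(J),\ \max(I)<j\} \] such that the orientation $B$ obtained from $A$ by flipping $j$ to $i$ (i.e. $B(H)=i$ if $A(H)=j$ and $i\in H$, and $B(H)=A(H)$ otherwise) is acyclic.
   Context: An interval hypergraph $\mathcal{I}$ on $[n]$ is a collection of intervals of $[n]$ containing all singletons. It is distributive if for all $I,J\in\mathcal{I}$ with $I\not\subseteq J$, $I\not\supseteq J$ and $I\cap J\ne\varnothing$, the intersection $I\cap J$ is in $\mathcal{I}$ and is initial or final (i.e. shares its minimum or its maximum) in every $K\in\mathcal{I}$ with $I\cap J\subseteq K$. An orientation is a map $O:\mathcal{I}\to[n]$ with $O(I)\in I$; it is acyclic if there are no $H_1,\dots,H_k$, $k\ge2$, with $O(H_{i+1})\in H_i\setminus\{O(H_i)\}$ for $i\in[k-1]$ and $O(H_1)\in H_k\setminus\{O(H_k)\}$. *)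

From mathcomp Require Import all_boot.
Set Implicit Arguments. Unset Strict Implicit. Unset Printing Implicit Defensive.

(* Ground set [n] is modelled as 'I_n = {0,...,n-1} (shift by one). *)

Definition imin n (S : {set 'I_n}) : nat := \big[minn/n]_(i in S) (i : nat).
Definition imax n (S : {set 'I_n}) : nat := \max_(i in S) (i : nat).

Definition is_interval n (S : {set 'I_n}) : Prop :=
  S != set0 /\
  forall x y z : 'I_n, x \in S -> z \in S -> x <= y -> y <= z -> y \in S.

Definition interval_hypergraph n (HG : {set {set 'I_n}}) : Prop :=
  (forall S, S \in HG -> is_interval S) /\ (forall x : 'I_n, [set x] \in HG).

Definition distributive n (HG : {set {set 'I_n}}) : Prop :=
  forall I J, I \in HG -> J \in HG ->
    ~~ (I \subset J) -> ~~ (J \subset I) -> I :&: J != set0 ->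
    (I :&: J \in HG) /\
    (forall K, K \in HG -> I :&: J \subset K ->
       imin (I :&: J) = imin K \/ imax (I :&: J) = imax K).

Definition is_orientation n (HG : {set {set 'I_n}}) (O : {set 'I_n} -> 'I_n) : Prop :=
  forall H, H \in HG -> O H \in H.

Definition orel n (O : {set 'I_n} -> 'I_n) : rel {set 'I_n} :=
  fun H H' => O H' \in H :\ O H.

Definition acyclic n (HG : {set {set 'I_n}}) (O : {set 'I_n} -> 'I_n) : Prop :=
  forall s : seq {set 'I_n}, all (fun H => H \in HG) s -> 2 <= size s ->
    ~~ cycle (orel O) s.

Definition flip n (A : {set 'I_n} -> 'I_n) (j i : 'I_n) : {set 'I_n} -> 'I_n :=
  fun H => if (A H == j) && (i \in H) then i else A H.

(* Write m = min J and j = A(J), choose K with min K = m and max K < j of largest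
   maximum M, and flip j to i = A(K).  Read orientations on vertices: u -> w when some
   edge containing u is oriented to w <> u.  Flipped edges only create arcs into i, so
   a new cycle yields a path from i along unflipped arcs to a vertex u of a flipped edge
   H (A(H) = j, i in H, u <> i).  Along such a path each vertex is i, or lies below m
   while some edge through i avoiding j reaches below m, or is reached from j by a
   nonempty path of A; any other step would leave through an edge below j with a vertex
   above M, against the choice of K or distributivity.  At u, the first case is
   excluded, the second contradicts distributivity at H, and the third closes a cycle
   of A through u -> j. *)

From mathcomp Require Import all_boot.
Set Implicit Arguments. Unset Strict Implicit. Unset Printing Implicit Defensive.

Section IntervalBounds.
Variable n : nat.
Implicit Types (S : {set 'I_n}) (x : 'I_n).

Lemma imin_leq S x : x \in S -> imin S <= x.
Proof.
move=> xS; rewrite /imin -big_filter.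
have : x \in [seq y <- index_enum 'I_n | y \in S] by rewrite mem_filter xS mem_index_enum.
elim: [seq _ <- _ | _] => //= y s IHs; rewrite inE big_cons => /orP[/eqP <-|/IHs].
  exact: geq_minl.
by rewrite geq_min => ->; rewrite orbT.
Qed.

Lemma imin_mem S : S != set0 -> exists2 x, x \in S & imin S = x.
Proof.
case/set0Pn=> x0 x0S.
suff [Sn|//] : imin S = n \/ exists2 x, x \in S & imin S = x.
  by have := imin_leq x0S; rewrite Sn leqNgt ltn_ord.
rewrite /imin; elim/big_ind: _ => [|a b Ha Hb|x xS]; [by left| |by right; exists x].
by rewrite /minn; case: ifP.
Qed.

Lemma leq_imin S c : S != set0 -> (forall x, x \in S -> c <= x) -> c <= imin S.
Proof. by case/imin_mem=> x xS ->; apply. Qed.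

Lemma imax_geq S x : x \in S -> x <= imax S.
Proof. exact: (@leq_bigmax_cond _ (mem S) (fun y : 'I_n => y : nat)). Qed.

Lemma imax_leq S c : (forall x, x \in S -> x <= c) -> imax S <= c.
Proof. by move=> Sc; apply/bigmax_leqP => x /Sc. Qed.

Lemma imax_mem S : S != set0 -> exists2 x, x \in S & imax S = x.
Proof.
rewrite -card_gt0 => /(@eq_bigmax_cond _ (mem S) (fun y : 'I_n => y : nat)).
by case=> x xS Sx; exists x.
Qed.

Lemma imax_ltn S c : S != set0 -> (forall x, x \in S -> x < c) -> imax S < c.
Proof. by case/imax_mem=> x xS ->; apply. Qed.

Lemma imin_set1 x : imin [set x] = x.
Proof.
apply/eqP; rewrite eqn_leq imin_leq ?set11 //.
by apply: leq_imin => [|y /set1P ->]; first by apply/set0Pn; exists x; rewrite set11.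
Qed.

Lemma imax_set1 x : imax [set x] = x.
Proof. by apply/eqP; rewrite eqn_leq imax_geq ?set11 // andbT; apply: imax_leq => y /set1P ->. Qed.

Lemma mem_interval S x : is_interval S -> (x \in S) = (imin S <= x <= imax S).
Proof.
case=> S0 Sconv; apply/idP/andP => [xS|[lx xu]]; first by rewrite imin_leq ?imax_geq.
have [a aS Sa] := imin_mem S0; have [b bS Sb] := imax_mem S0.
by apply: (Sconv a x b); rewrite -?Sa -?Sb.
Qed.

Lemma interval_below S (x c y : 'I_n) :
  is_interval S -> x \in S -> x < c -> c \notin S -> y \in S -> y < c.
Proof.
case=> _ Sconv xS xc cS yS; apply: contraNT cS; rewrite -leqNgt => cy.
exact: (Sconv x c y) (ltnW xc) cy.
Qed.

End IntervalBounds.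

Lemma distributive_meet n (HG : {set {set 'I_n}}) (I K : {set 'I_n}) (a b c : 'I_n) :
  distributive HG -> I \in HG -> K \in HG ->
  a \in I :\: K -> b \in K :\: I -> c \in I :&: K ->
  I :&: K \in HG /\
  (forall L, L \in HG -> I :&: K \subset L ->
     imin (I :&: K) = imin L \/ imax (I :&: K) = imax L).
Proof.
rewrite !inE => HGd IHG KHG /andP[aK aI] /andP[bI bK] cIK.
apply: HGd => //.
- by apply/subsetPn; exists a.
- by apply/subsetPn; exists b.
- by apply/set0Pn; exists c; rewrite inE.
Qed.

Lemma connect_ind (T : finType) (e : rel T) (P : T -> Prop) x :
  P x -> (forall a b, P a -> e a b -> P b) -> forall y, connect e x y -> P y.
Proof.
move=> Px Pe y /connectP[p]; elim: p x Px => [|z p IHp] x Px /=; first by move=> _ ->.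
by case/andP=> exz /(IHp z (Pe x z Px exz)).
Qed.

Section VertexArcs.
Variables (n : nat) (HG : {set {set 'I_n}}) (O : {set 'I_n} -> 'I_n).

Definition arc : rel 'I_n :=
  fun u w => [exists G in HG, [&& u \in G, O G == w & u != w]].

Lemma arcP u w :
  reflect (exists2 G, G \in HG & [/\ u \in G, O G = w & u != w]) (arc u w).
Proof.
apply: (iffP exists_inP) => [[G GHG /and3P[uG /eqP OG uw]]|[G GHG [uG OG uw]]].
  by exists G.
by exists G; rewrite // uG OG eqxx uw.
Qed.

Lemma orel_arc G H : G \in HG -> orel O G H -> arc (O H) (O G).
Proof. by rewrite /orel in_setD1 => GHG /andP[OHG OGH]; apply/arcP; exists G. Qed.

Lemma orel_path_connect G s : all [in HG] (G :: s) ->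
  path (orel O) G s -> connect arc (O (last G s)) (O G).
Proof.
elim: s G => [|H s IHs] G /=; first by rewrite connect0.
case/and3P=> GHG HHG sHG /andP[GH Hs].
by apply: connect_trans (IHs H _ Hs) (connect1 (orel_arc GHG GH)); rewrite /= HHG.
Qed.

Lemma arc_path_orel x y p : path arc x (y :: p) ->
  exists G s, [/\ all [in HG] (G :: s), path (orel O) G s, O G = last y p,
                  x \in last G s & O (last G s) != x].
Proof.
elim: p x y => [|z p IHp] x y /=.
  by rewrite andbT => /arcP[G GHG [xG OGy xy]]; exists G, [::]; rewrite /= GHG OGy eq_sym.
case/andP=> /arcP[G GHG [xG OGy xy]] yzp.
have [H [s [/andP[HHG sHG] Hs OHlast yl Oly]]] := IHp y z yzp.
exists H, (rcons s G); rewrite last_rcons rcons_path all_rcons HHG GHG.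
by rewrite Hs OHlast xG OGy eq_sym xy /orel in_setD1 OGy eq_sym Oly yl.
Qed.

Lemma acyclicP : acyclic HG O <-> (forall u w, arc u w -> ~~ connect arc w u).
Proof.
split=> [Oac u w uw|noc [|G [|H s]] //= sHG _].
  apply/negP=> /connectP[p wp pu].
  have uwp : path arc u (w :: p) by rewrite /= uw.
  have [G [s [sHG Gs OG ul Olu]]] := arc_path_orel uwp.
  apply: (negP (Oac (G :: s) sHG _)); last first.
    by rewrite /= rcons_path Gs /orel in_setD1 OG -pu eq_sym Olu ul.
  case: s {sHG Gs ul} Olu => //= Olu.
  by move: Olu; rewrite OG -pu eqxx.
case/and3P: sHG => GHG HHG sHG; apply/negP => /andP[GH Hs].
apply: (negP (noc _ _ (orel_arc GHG GH))); rewrite -[G in O G](last_rcons H s G).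
by apply: orel_path_connect Hs; rewrite /= all_rcons HHG GHG.
Qed.

End VertexArcs.

Section FlipTowardsK.
Variables (n : nat) (HG : {set {set 'I_n}}) (A : {set 'I_n} -> 'I_n).
Variables (J K : {set 'I_n}) (m : 'I_n).
Hypotheses (HGiv : interval_hypergraph HG) (HGd : distributive HG).
Hypotheses (Aor : is_orientation HG A) (Aac : acyclic HG A).
Hypotheses (JHG : J \in HG) (KHG : K \in HG).

Local Notation j := (A J).
Local Notation i := (A K).
Local Notation M := (imax K).

Hypotheses (minJ : imin J = m) (minK : imin K = m) (M_lt_j : M < j).
Hypothesis K_maximal : forall L, L \in HG -> imin L = m -> imax L < j -> imax L <= M.
Hypothesis j_neq_m : (j : nat) != m.

Lemma mem_edge G (x : 'I_n) : G \in HG -> (x \in G) = (imin G <= x <= imax G).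
Proof. by move=> GHG; apply/mem_interval/HGiv.1. Qed.

Lemma edge_between G (x y z : 'I_n) :
  G \in HG -> x \in G -> z \in G -> x <= y <= z -> y \in G.
Proof.
move=> GHG xG zG /andP[xy yz].
by rewrite mem_edge // (leq_trans (imin_leq xG)) // (leq_trans yz) // imax_geq.
Qed.

Lemma A_no_cycle u w : arc HG A u w -> connect (arc HG A) w u -> False.
Proof. by move/((acyclicP HG A).1 Aac u w)/negP. Qed.

Lemma j_in_J : j \in J. Proof. exact: Aor. Qed.

Lemma m_le_J (x : 'I_n) : x \in J -> m <= x.
Proof. by rewrite -minJ; apply: imin_leq. Qed.

Lemma m_lt_j : m < j.
Proof. by rewrite ltn_neqAle eq_sym j_neq_m m_le_J ?j_in_J. Qed.

Lemma mem_J (x : 'I_n) : m <= x <= j -> x \in J.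
Proof.
by rewrite mem_edge // minJ => /andP[-> xj]; rewrite (leq_trans xj) ?imax_geq ?j_in_J.
Qed.

Lemma mem_K (x : 'I_n) : (x \in K) = (m <= x <= M).
Proof. by rewrite mem_edge // minK. Qed.

Lemma m_le_i : m <= i.
Proof. by have := Aor KHG; rewrite mem_K => /andP[]. Qed.

Lemma i_le_M : i <= M.
Proof. by have := Aor KHG; rewrite mem_K => /andP[]. Qed.

Lemma i_lt_j : i < j.
Proof. exact: leq_ltn_trans i_le_M M_lt_j. Qed.

Lemma K_sub_J : K \subset J.
Proof.
apply/subsetP => x; rewrite mem_K => /andP[mx xM].
by rewrite mem_J // mx ltnW // (leq_ltn_trans xM).
Qed.

(* [G :&: J] starts at [m] and stops below [j], so the choice of [K] bounds it by [M]. *)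
Lemma edge_at_m_le_M G (b : 'I_n) : G \in HG -> m \in G -> j \notin G -> b \in G -> b <= M.
Proof.
move=> GHG mG jG bG.
have G_lt_j x : x \in G -> x < j := interval_below (HGiv.1 G GHG) mG m_lt_j jG.
have mGJ : m \in G :&: J by rewrite inE mG mem_J // leqnn ltnW // m_lt_j.
have GJ0 : G :&: J != set0 by apply/set0Pn; exists m.
suff maxGJ : imax (G :&: J) <= M.
  have [bm|mb] := ltnP b m; first exact: ltnW (leq_trans bm (leq_trans m_le_i i_le_M)).
  by rewrite (leq_trans _ maxGJ) // imax_geq // inE bG mem_J // mb ltnW ?G_lt_j.
apply: K_maximal.
- have [GJ|/subsetPn[y yG yJ]] := boolP (G \subset J); first by rewrite (setIidPl GJ).
  have yGJ : y \in G :\: J by rewrite inE yG yJ.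
  have jJG : j \in J :\: G by rewrite inE jG j_in_J.
  by case: (distributive_meet HGd GHG JHG yGJ jJG mGJ).
- apply/eqP; rewrite eqn_leq imin_leq //=.
  by apply: leq_imin GJ0 _ => x; rewrite inE => /andP[_ /m_le_J].
- by apply: imax_ltn GJ0 _ => x; rewrite inE => /andP[/G_lt_j].
Qed.

(* If [m] is not in [G], the edge [K :&: G] shares no end with [J]: it misses [m] and
   stops at or before [M]. *)
Lemma edge_below_j_le_M G (b : 'I_n) :
  G \in HG -> j \notin G -> (m \in G) || (i \in G) -> b \in G -> b <= M.
Proof.
move=> GHG jG mGiG bG.
have [mG|mG] := boolP (m \in G); first exact: edge_at_m_le_M GHG mG jG bG.
have iG : i \in G by rewrite (negbTE mG) in mGiG.
rewrite leqNgt; apply/negP => Mb.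
have iKG : i \in K :&: G by rewrite inE Aor.
have KG0 : K :&: G != set0 by apply/set0Pn; exists i.
have mKG : m \in K :\: G by rewrite inE mG mem_K leqnn (leq_trans m_le_i i_le_M).
have bGK : b \in G :\: K by rewrite inE bG mem_K negb_and -!ltnNge Mb orbT.
have [_ KG_end] := distributive_meet HGd KHG GHG mKG bGK iKG.
case: (KG_end J JHG (subset_trans (subsetIl K G) K_sub_J)) => [minKG|maxKG].
- suff : m < imin (K :&: G) by rewrite minKG minJ ltnn.
  apply: leq_imin KG0 _ => x; rewrite inE mem_K => /andP[/andP[mx _] xG].
  by rewrite ltn_neqAle mx andbT; apply: contraNneq mG => /val_inj ->.
- suff : imax J <= M by rewrite leqNgt (leq_trans M_lt_j) ?imax_geq ?j_in_J.
  by rewrite -maxKG; apply: imax_leq => x; rewrite inE mem_K => /andP[/andP[_ ->]].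
Qed.

Definition low_edge := exists2 G, G \in HG & [/\ i \in G, j \notin G & imin G < m].

Lemma low_edge_bound H (u : 'I_n) : low_edge -> H \in HG -> j \in H -> u \in H -> m <= u.
Proof.
case=> G GHG [iG jG]; have [y yG ->] := imin_mem (HGiv.1 G GHG).1 => ym HHG jH uH.
rewrite leqNgt; apply/negP => um.
have G_lt_j x : x \in G -> x < j := interval_below (HGiv.1 G GHG) iG i_lt_j jG.
have iGJ : i \in G :&: J by rewrite inE iG (subsetP K_sub_J) ?Aor.
have GJ0 : G :&: J != set0 by apply/set0Pn; exists i.
have yGJ : y \in G :\: J by rewrite inE yG andbT; apply: contraTN ym => /m_le_J; rewrite -leqNgt.
have jJG : j \in J :\: G by rewrite inE jG j_in_J.
have [_ GJ_end] := distributive_meet HGd GHG JHG yGJ jJG iGJ.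
have GJ_sub : G :&: J \subset H.
  apply/subsetP => x; rewrite inE => /andP[xG xJ].
  by apply: (edge_between HHG uH jH); rewrite (leq_trans (ltnW um)) ?m_le_J //= ltnW ?G_lt_j.
case: (GJ_end H HHG GJ_sub) => [minGJ|maxGJ].
- suff : m <= imin H by rewrite leqNgt (leq_ltn_trans (imin_leq uH) um).
  by rewrite -minGJ; apply: leq_imin GJ0 _ => x; rewrite inE => /andP[_ /m_le_J].
- suff : imax H < j by rewrite ltnNge imax_geq.
  by rewrite -maxGJ; apply: imax_ltn GJ0 _ => x; rewrite inE => /andP[/G_lt_j].
Qed.

Local Notation B := (flip A j i).

Definition flipped (G : {set 'I_n}) := (A G == j) && (i \in G).
Definition kept := [set G in HG | ~~ flipped G].
Definition flips := [set G in HG | flipped G].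

Lemma arc_kept_A u w : arc kept A u w -> arc HG A u w.
Proof. by case/arcP => G; rewrite inE => /andP[GHG _] uGw; apply/arcP; exists G. Qed.

Lemma arc_kept_B u w : arc kept A u w -> arc HG B u w.
Proof.
case/arcP => G; rewrite inE => /andP[GHG /negbTE fG] uGw; apply/arcP; exists G => //.
by rewrite /flip -/(flipped G) fG.
Qed.

Lemma connect_kept_A : subrel (connect (arc kept A)) (connect (arc HG A)).
Proof. by apply: connect_sub => u w /arc_kept_A/connect1. Qed.

Lemma connect_kept_B : subrel (connect (arc kept A)) (connect (arc HG B)).
Proof. by apply: connect_sub => u w /arc_kept_B/connect1. Qed.

Lemma arc_B_split u w : arc HG B u w -> arc kept A u w \/ w = i /\ arc flips B u i.
Proof.
case/arcP => G GHG [uG BG uw].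
have BGE : B G = if flipped G then i else A G by [].
have [fG|/negbTE fG] := boolP (flipped G); rewrite BGE fG in BG.
  right; split=> //; apply/arcP; exists G; first by rewrite inE GHG fG.
  by split=> //; [rewrite BGE fG | rewrite BG].
by left; apply/arcP; exists G; [rewrite inE GHG fG | split].
Qed.

Lemma kept_step a b : arc kept A a b -> connect (arc HG A) i a ->
  a = i \/ a < m /\ low_edge -> [\/ b = i, b < m /\ low_edge | arc HG A j b].
Proof.
case/arcP => G; rewrite inE => /andP[GHG fG] [aG AGb ab] ia Ha.
have ai : a <= i by case: Ha => [->|[am _]] //; apply: ltnW (leq_trans am m_le_i).
have [jG|jG] := boolP (j \in G).
  have iG : i \in G by apply: (edge_between GHG aG jG); rewrite ai ltnW ?i_lt_j.
  apply: Or33; apply/arcP; exists G => //; split=> //.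
  by apply: contraNneq fG => jb; rewrite /flipped AGb jb eqxx iG.
have bG : b \in G by rewrite -AGb Aor.
have [bm|mb] := ltnP b m.
  apply: Or32; split=> //; case: Ha => [ai'|[]//]; exists G => //.
  by split=> //; [rewrite -ai' | apply: leq_ltn_trans (imin_leq bG) bm].
have bK : b \in K.
  rewrite mem_K mb; apply: (edge_below_j_le_M GHG jG _ bG).
  case: Ha => [<-|[am _]]; first by rewrite aG orbT.
  by rewrite (edge_between GHG aG bG) // (ltnW am) mb.
have [->|bi] := eqVneq b i; first exact: Or31.
exfalso; apply: (A_no_cycle (u := b) (w := i)); first by apply/arcP; exists K.
by apply: connect_trans ia (connect1 _); apply/arcP; exists G.
Qed.

Lemma kept_reach_from_i u : connect (arc kept A) i u ->
  (u = i \/ u < m /\ low_edge) \/ exists2 x, arc HG A j x & connect (arc HG A) x u.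
Proof.
pose P u := connect (arc HG A) i u /\
  ((u = i \/ u < m /\ low_edge) \/ exists2 x, arc HG A j x & connect (arc HG A) x u).
move=> iu; suff [] : P u by [].
move: u iu; apply: (connect_ind (P := P)) => [|a b [ia Pa] ab].
  by split; [apply: connect0 | left; left].
have ib := connect_trans ia (connect1 (arc_kept_A ab)); split=> //.
case: Pa => [Ha|[x jx xa]].
  by case: (kept_step ab ia Ha) => [bi|bm|jb]; [left; left|left; right|right; exists b].
by right; exists x => //; apply: connect_trans xa (connect1 (arc_kept_A ab)).
Qed.

Lemma no_kept_path_to_flip u : connect (arc kept A) i u -> ~~ arc flips B u i.
Proof.
move/kept_reach_from_i => Hu; apply/negP => /arcP[H].
rewrite inE => /andP[HHG /andP[/eqP AHj iH]] [uH _ ui].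
have jH : j \in H by rewrite -AHj Aor.
case: Hu => [[/eqP|[um low]]|[x jx xu]]; first by rewrite (negbTE ui).
  by have := low_edge_bound low HHG jH uH; rewrite leqNgt um.
have [uj|uj] := eqVneq u j; first by apply: (A_no_cycle jx); rewrite -uj.
apply: (A_no_cycle (u := u) (w := j)); first by apply/arcP; exists H.
exact: connect_trans (connect1 jx) xu.
Qed.

Lemma connect_B_from_i y : connect (arc HG B) i y -> connect (arc kept A) i y.
Proof.
move: y; apply: (connect_ind (P := fun y => connect (arc kept A) i y)) => [|a b ia].
  exact: connect0.
by case/arc_B_split => [ab|[-> _]]; [apply: connect_trans ia (connect1 ab)|apply: connect0].
Qed.

Lemma connect_B_split x y : connect (arc HG B) x y ->
  connect (arc kept A) x y \/
  connect (arc HG B) i y /\ exists2 s, arc flips B s i & connect (arc HG B) x s.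
Proof.
move: y; apply: connect_ind => [|a b Pa]; first by left; apply: connect0.
case/arc_B_split => [ab|[-> sa]]; case: Pa => [xa|[ia s_flip]].
- by left; apply: connect_trans xa (connect1 ab).
- by right; split=> //; apply: connect_trans ia (connect1 (arc_kept_B ab)).
- right; split; first exact: connect0.
  by exists a => //; apply: connect_kept_B.
- by right; split; first exact: connect0.
Qed.

Lemma flip_acyclic : acyclic HG B.
Proof.
apply/acyclicP => u w uw; apply/negP => wu.
suff [s s_flip i_s] : exists2 s, arc flips B s i & connect (arc HG B) i s.
  exact: negP (no_kept_path_to_flip (connect_B_from_i i_s)) s_flip.
case: (arc_B_split uw) => [uw_kept|[wi u_flip]]; last by rewrite wi in wu; exists u.
case: (connect_B_split wu) => [wu_kept|[iu [s s_flip ws]]].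
  by case: (A_no_cycle (arc_kept_A uw_kept) (connect_kept_A wu_kept)).
exists s => //; apply: connect_trans iu (connect_trans (connect1 (arc_kept_B uw_kept)) ws).
Qed.

End FlipTowardsK.

Theorem proposition5p23 (n : nat) (HG : {set {set 'I_n}})
  (A : {set 'I_n} -> 'I_n) (J : {set 'I_n}) :
  interval_hypergraph HG -> distributive HG ->
  is_orientation HG A -> acyclic HG A ->
  J \in HG -> (A J : nat) != imin J ->
  exists i : 'I_n,
    imin J <= i /\
    i <= \max_(K in HG | (imin K == imin J) && (imax K < A J)) imax K /\
    acyclic HG (flip A (A J) i).
Proof.
move=> HGiv HGd Aor Aac JHG j_neq_m.
have [m _ minJ] := imin_mem (HGiv.1 J JHG).1.
pose P K := (K \in HG) && ((imin K == imin J) && (imax K < A J)).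
have Pm : P [set m].
  rewrite /P HGiv.2 imin_set1 imax_set1 minJ eqxx /=.
  by rewrite ltn_neqAle eq_sym -minJ j_neq_m imin_leq ?Aor.
case: (arg_maxnP (@imax n) Pm) => K PK K_maximal.
have /and3P[KHG /eqP minK M_lt_j] := PK.
exists (A K); split; last split.
- by rewrite -minK imin_leq ?Aor.
- exact: leq_trans (imax_geq (Aor K KHG)) (leq_bigmax_cond _ PK).
- rewrite minJ in minK j_neq_m.
  apply: (flip_acyclic HGiv HGd Aor Aac JHG KHG minJ minK M_lt_j _ j_neq_m).
  by move=> L LHG minL ML; apply: K_maximal; rewrite /P LHG minL minJ eqxx ML.
Qed.
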